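(* Let $n, r, d$ be positive integers with $n\geqslant r+1$ and $d\geqslant2$. Then $\mathcal{A}_r^d$ is a percolating set of $K_n^d$ in the $r$-neighbor bootstrap percolation process.
   Context: All graphs are finite, simple and undirected. For a nonnegative integer $r$ and a graph $G$, the $r$-neighbor bootstrap percolation process on $G$ starts with a set $A_0\subseteq V(G)$ of initially active vertices, and for $i\geqslant 1$, $A_i=A_{i-1}\cup\{v\in V(G) : |N(v)\cap A_{i-1}|\geqslant r\}$. The set $A_0$ is a percolating set if $\bigcup_{i\geqslant 0}A_i=V(G)$. $K_n^d$ has vertex set $[\![n]\!]^d$, where $[\![n]\!]=\{0,1,\ldots,n-1\}$, and two vertices are adjacent iff they differ in exactly one coordinate. For $t=(t_1,\ldots,t_d)\in\{0,1\}^d$ and $P\subseteq[\![n]\!]^d$, let $P(t)$ be the set of $(x_1,\ldots,x_d)\in[\![n]\!]^d$ for which there is $(p_1,\ldots,p_d)\in P$ with $x_i=t_i(n-1-p_i)+(1-t_i)p_i$ for all $i$. Let $A_r^d=\{(x_1,\ldots,x_d)\in[\![n]\!]^d : \sum_{i=1}^d x_i\leqslant\lceil r/2\rceil-1\}$, let $T=\{(t_1,\ldots,t_d)\in\{0,1\}^d : t_1=t_2\}$, and $\mathcal{A}_r^d=\bigcup_{t\in T}A_r^d(t)$. *)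

From mathcomp Require Import all_boot.
Set Implicit Arguments. Unset Strict Implicit. Unset Printing Implicit Defensive.

Definition vertex (n d : nat) := {ffun 'I_d -> 'I_n}.

Definition Kadj (n d : nat) (x y : vertex n d) : bool :=
  #|[set i : 'I_d | x i != y i]| == 1.

Definition nbhd (n d : nat) (v : vertex n d) : {set vertex n d} :=
  [set u | Kadj v u].

Definition bp_step (n d r : nat) (A : {set vertex n d}) : {set vertex n d} :=
  A :|: [set v | r <= #|nbhd v :&: A|].

Definition bp_iter (n d r : nat) (A0 : {set vertex n d}) (i : nat) :
  {set vertex n d} := iter i (@bp_step n d r) A0.

Definition percolating (n d r : nat) (A0 : {set vertex n d}) : Prop :=
  forall v : vertex n d, exists i : nat, v \in bp_iter r A0 i.

Definition reflect_by (n d : nat) (t : {ffun 'I_d -> bool}) (p : vertex n d)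
  : vertex n d := [ffun i => if t i then rev_ord (p i) else p i].

Definition refl_set (n d : nat) (P : {set vertex n d}) (t : {ffun 'I_d -> bool})
  : {set vertex n d} := [set x | [exists p in P, x == reflect_by t p]].

Definition A_rd (n d r : nat) : {set vertex n d} :=
  [set x : vertex n d | \sum_(i < d) (x i : nat) <= uphalf r - 1].

(* T = { t in {0,1}^d : t_1 = t_2 }  (coordinates 1,2 are indices 0,1). *)
Definition Tset (d : nat) : {set {ffun 'I_d -> bool}} :=
  [set t : {ffun 'I_d -> bool} | [forall i : 'I_d, forall j : 'I_d,
              ((val i == 0) && (val j == 1)) ==> (t i == t j)]].

Definition calA (n d r : nat) : {set vertex n d} :=
  \bigcup_(t in Tset d) refl_set (A_rd n d r) t.

From mathcomp Require Import all_boot zify.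

Set Implicit Arguments. Unset Strict Implicit. Unset Printing Implicit Defensive.

(* Let c = uphalf r.  For d = 2, calA consists of the two opposite corner
   triangles x + y < c and (n-1-x) + (n-1-y) < c (t_1 = t_2 allows no other
   reflection), and they percolate: rows are filled from the outside in, each
   row swept from one triangle towards the other, and every newly infected
   vertex sees 2c >= r infected neighbours.  Higher dimensions follow by
   induction on the number of free coordinates: a vertex at distance k from
   the ends along a new coordinate j has 2k infected neighbours in the outer
   layers, so inside its slice threshold r - 2k suffices; reflecting
   coordinate j, which is not one of the first two, maps the seed of that
   slice for r - 2k into calA, because uphalf (r - 2k) + k = c. *)

Definition bp_closed n d r (S : {set vertex n d}) :=
  forall v, r <= #|nbhd v :&: S| -> v \in S.

Lemma bp_step_mono n d r : {homo @bp_step n d r : A B / A \subset B}.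
Proof.
move=> A B subAB; apply/subsetP => x; rewrite !inE => /orP [Ax | deg_x].
  by rewrite (subsetP subAB).
apply/orP; right; apply: leq_trans deg_x _.
by apply: subset_leq_card; apply: setIS.
Qed.

Lemma percolating_of_closed n d r (A0 : {set vertex n d}) :
  (forall S : {set vertex n d}, A0 \subset S -> bp_closed r S -> forall v, v \in S) ->
  percolating r A0.
Proof.
move=> closed_full v.
pose F X := bp_step r (A0 :|: X).
have F_mono : {homo F : X Y / X \subset Y}.
  by move=> X Y subXY; apply/bp_step_mono/setUS.
have F_fix := fixsetK F_mono.
have A0_iter i : A0 \subset bp_iter r A0 i.
  elim: i => [|i IHi]; first exact: subxx.
  by apply: subset_trans IHi _; rewrite /bp_iter iterS; apply: subsetUl.
have F_iter i : iter i F set0 \subset bp_iter r A0 i.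
  elim: i => [|i IHi]; first exact: sub0set.
  rewrite iterS /bp_iter iterS; apply: subset_trans (F_mono _ _ IHi) _.
  by rewrite /F (setUidPr (A0_iter i)).
suff : v \in fixset F by exists #|vertex n d|; apply: (subsetP (F_iter _)).
apply: closed_full.
- by rewrite -F_fix; apply: subset_trans (subsetUl _ _) (subsetUl _ _).
- move=> w deg_w; rewrite -F_fix !inE; apply/orP; right.
  by apply: leq_trans deg_w _; apply/subset_leq_card/setIS/subsetUr.
Qed.

Lemma sum_nat_true lo hi (f : nat -> bool) :
  (forall i, lo <= i < hi -> f i) -> \sum_(lo <= i < hi) f i = hi - lo.
Proof.
move=> f_true; rewrite (eq_big_nat _ _ (F2 := fun => 1)) ?sum_nat_const_nat ?muln1 //.
by move=> i /f_true ->.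
Qed.

Lemma sum_prefix_suffix_ge n a b (f : nat -> bool) :
  a + b <= n -> (forall i, i < n -> (i < a) || (n - b <= i) -> f i) ->
  a + b <= \sum_(0 <= i < n) f i.
Proof.
move=> le_abn f_ends.
rewrite (@big_cat_nat _ _ _ a) //=; last by lia.
rewrite (@big_cat_nat _ _ _ (n - b) a n) /=; try lia.
rewrite (@sum_nat_true 0 a) => [|i /andP [_ hi]]; last by apply: f_ends; lia.
rewrite (@sum_nat_true (n - b) n) => [|i /andP [hi hin]]; last by apply: f_ends; lia.
lia.
Qed.

Lemma sum_nat_rev n (f g : nat -> bool) :
  (forall i, i < n -> f i = g (n.-1 - i)) ->
  \sum_(0 <= i < n) f i = \sum_(0 <= i < n) g i.
Proof.
move=> fg; rewrite [RHS]big_nat_rev; apply: eq_big_nat => i /andP [_ lt_in].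
by rewrite fg //; congr (nat_of_bool (g _)); lia.
Qed.

Definition end_dist (n x : nat) := minn x (n.-1 - x).

Lemma end_dist_sum_ge n k y (f : nat -> bool) :
  y < n -> k <= end_dist n y -> (forall i, i < n -> end_dist n i < k -> f i) ->
  k + k <= \sum_(0 <= i < n) ((i != y) && f i).
Proof.
rewrite /end_dist => lt_yn le_k_y f_near; apply: sum_prefix_suffix_ge; first lia.
move=> i lt_in near_i; rewrite f_near ?andbT //; first by apply/eqP; lia.
rewrite /end_dist; lia.
Qed.

Section RookPlane.

Variables (n r : nat).
Hypothesis lt_rn : r < n.
Local Notation c := (uphalf r).

Definition row_deg (P : nat -> nat -> bool) x y := \sum_(0 <= i < n) ((i != x) && P i y).
Definition col_deg (P : nat -> nat -> bool) x y := \sum_(0 <= i < n) ((i != y) && P x i).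

Definition rook_closed P :=
  forall x y, x < n -> y < n -> r <= row_deg P x y + col_deg P x y -> P x y.

Definition low_corner (P : nat -> nat -> bool) :=
  forall x y, x < n -> y < n -> x + y < c -> P x y.

Definition rot (P : nat -> nat -> bool) x y := P (n.-1 - x) (n.-1 - y).

Lemma rotK P x y : x < n -> y < n -> rot (rot P) x y = P x y.
Proof. by move=> lt_xn lt_yn; rewrite /rot; congr P; lia. Qed.

Lemma rook_closed_rot P : rook_closed P -> rook_closed (rot P).
Proof.
move=> P_closed x y lt_xn lt_yn deg_ge; apply: P_closed; try lia.
have rev_neq i z : i < n -> z < n -> (i != z) = (n.-1 - i != n.-1 - z).
  by move=> lt_in lt_zn; apply/negb_inj/eqP/eqP; lia.
have row_rot : row_deg (rot P) x y = row_deg P (n.-1 - x) (n.-1 - y).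
  by apply: sum_nat_rev => i lt_in; rewrite rev_neq.
have col_rot : col_deg (rot P) x y = col_deg P (n.-1 - x) (n.-1 - y).
  by apply: sum_nat_rev => i lt_in; rewrite rev_neq.
by rewrite -row_rot -col_rot.
Qed.

Lemma row_sweep P k :
  rook_closed P -> low_corner P -> low_corner (rot P) ->
  (forall x y, x < n -> y < n -> end_dist n y < k -> P x y) -> k < c ->
  forall j, j < n -> P (n.-1 - j) k.
Proof.
move=> P_closed P_low P_high P_band lt_kc.
elim/ltn_ind => j IHj lt_jn.
(* In its row, cell (n-1-j, k) sees the c-k seed cells x < c-k and the j cells
   swept before it; in its column, either the 2k band cells or, when j < c-k,
   the k lower band cells and the c-j cells of the opposite corner. *)
have [lt_c|le_c] := ltnP (n.-1 - j) (c - k); first by apply: P_low; lia.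
apply: P_closed; [lia | lia | ].
have row_ge : (c - k) + j <= row_deg P (n.-1 - j) k.
  apply: sum_prefix_suffix_ge; first lia.
  move=> i lt_in /orP [lt_i | ge_i]; apply/andP; split; try (apply/eqP; lia).
  - by apply: P_low; lia.
  - by rewrite (_ : i = n.-1 - (n.-1 - i)); [apply: IHj | ]; lia.
have [lt_j|ge_j] := ltnP j (c - k).
- suff : k + (c - j) <= col_deg P (n.-1 - j) k by lia.
  apply: sum_prefix_suffix_ge; first lia.
  move=> i lt_in /orP [lt_i | ge_i]; apply/andP; split; try (apply/eqP; lia).
  + by apply: P_band; rewrite /end_dist; lia.
  + by rewrite -rotK; [apply: P_high | |]; lia.
- suff : k + k <= col_deg P (n.-1 - j) k by lia.
  apply: end_dist_sum_ge; [lia | rewrite /end_dist; lia | move=> i lt_in].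
  by apply: P_band => //; lia.
Qed.

Lemma rook_plane_fill P :
  rook_closed P -> low_corner P -> low_corner (rot P) ->
  forall x y, x < n -> y < n -> P x y.
Proof.
move=> P_closed P_low P_high.
suff band k : forall x y, x < n -> y < n -> end_dist n y < k -> P x y.
  by move=> x y lt_xn lt_yn; apply: (band n) => //; rewrite /end_dist; lia.
elim: k => [//|k IHk] x y lt_xn lt_yn.
rewrite ltnS leq_eqVlt => /orP [/eqP e_yk | ]; last exact: IHk.
have [le_ck | lt_kc] := leqP c k.
  apply: P_closed => //; suff : k + k <= col_deg P x y by lia.
  by apply: end_dist_sum_ge => // [|i lt_in]; [lia | apply: IHk].
case: (y =P k) => [-> | ne_yk].
  rewrite (_ : x = n.-1 - (n.-1 - x)); last lia.
  by apply: (row_sweep P_closed P_low P_high IHk lt_kc); lia.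
have rot_band x' y' : x' < n -> y' < n -> end_dist n y' < k -> rot P x' y'.
  by move=> lt_x' lt_y' near_y'; apply: IHk; rewrite /end_dist in near_y' *; lia.
have rot_low x' y' : x' < n -> y' < n -> x' + y' < c -> rot (rot P) x' y'.
  by move=> lt_x' lt_y' near; rewrite rotK //; apply: P_low.
have := row_sweep (rook_closed_rot P_closed) P_high rot_low rot_band lt_kc lt_xn.
by rewrite /rot; congr P; rewrite /end_dist in e_yk; lia.
Qed.

End RookPlane.

Definition upd (I : finType) (T : Type) (f : {ffun I -> T}) (i : I) (x : T) :
  {ffun I -> T} := [ffun j => if j == i then x else f j].

Lemma upd_same (I : finType) T (f : {ffun I -> T}) i x : upd f i x i = x.
Proof. by rewrite ffunE eqxx. Qed.

Lemma upd_other (I : finType) T (f : {ffun I -> T}) i j x : j != i -> upd f i x j = f j.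
Proof. by rewrite ffunE => /negbTE ->. Qed.

Lemma Kadj_upd n d (w : vertex n d) i b : b != w i -> Kadj w (upd w i b).
Proof.
move=> neq_b; rewrite /Kadj (_ : [set j | w j != upd w i b j] = [set i]) ?cards1 //.
apply/setP => j; rewrite !inE ffunE.
by case: (j =P i) => [->|_]; rewrite ?eqxx // eq_sym.
Qed.

Definition ord_pred n (f : 'I_n -> bool) (i : nat) : bool := oapp f false (insub i).

Lemma ord_predE n (f : 'I_n -> bool) (b : 'I_n) : ord_pred f b = f b.
Proof. by rewrite /ord_pred valK. Qed.

Lemma sum_ord_pred n (f : 'I_n -> bool) (y : nat) :
  \sum_(b < n) ((b != y :> nat) && f b) = \sum_(0 <= i < n) ((i != y) && ord_pred f i).
Proof. by rewrite big_mkord; apply: eq_bigr => b _; rewrite ord_predE. Qed.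

Lemma nat2_of_ord n (Q : nat -> nat -> Prop) :
  (forall a b : 'I_n, Q a b) -> forall x y, x < n -> y < n -> Q x y.
Proof. by move=> Q_ord x y lt_xn lt_yn; apply: (Q_ord (Ordinal lt_xn) (Ordinal lt_yn)). Qed.

Lemma sum_ord_ltS d m (j : 'I_d) (F : 'I_d -> nat) : j = m :> nat ->
  \sum_(i < d | i < m.+1) F i = \sum_(i < d | i < m) F i + F j.
Proof.
move=> e_j; rewrite (bigD1 j) /= ?e_j // addnC; congr (_ + _); apply: eq_bigl => i.
by rewrite ltnS leq_eqVlt -val_eqE /= e_j; case: ltngtP.
Qed.

Lemma sum_ord_lt_dim d (F : 'I_d -> nat) : \sum_(i < d | i < d) F i = \sum_(i < d) F i.
Proof. by apply: eq_bigl => i; rewrite ltn_ord. Qed.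

Lemma Tset_const d b : [ffun=> b] \in Tset d.
Proof. by rewrite inE; apply/forallP => i; apply/forallP => j; rewrite !ffunE eqxx implybT. Qed.

Lemma Tset_upd d (t : {ffun 'I_d -> bool}) (j : 'I_d) b :
  1 < j -> t \in Tset d -> upd t j b \in Tset d.
Proof.
move=> lt1j; rewrite !inE => /forallP tT; apply/forallP => i; apply/forallP => i'.
apply/implyP => /andP [/eqP i0 /eqP i1].
have [ne_i ne_i'] : i != j /\ i' != j.
  by split; apply/eqP => e; move: i0 i1; rewrite e /=; lia.
by rewrite !upd_other //; apply: (implyP (forallP (tT i) i')); rewrite i0 i1.
Qed.

Lemma reflect_byE n d t (w : vertex n d) i :
  reflect_by t w i = (if t i then n.-1 - w i else w i) :> nat.
Proof. by rewrite ffunE; case: (t i) => //=; lia. Qed.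

Lemma reflect_byK n d t : involutive (@reflect_by n d t).
Proof. by move=> w; apply/ffunP => i; rewrite !ffunE; case: (t i); rewrite ?rev_ordK. Qed.

Section Slices.

Variables (n d : nat) (S : {set vertex n d}).

Definition deg_along (w : vertex n d) (i : 'I_d) :=
  \sum_(b < n) ((b != w i) && (upd w i b \in S)).

Lemma sum_deg_along_le w : \sum_(i < d) deg_along w i <= #|nbhd w :&: S|.
Proof.
pose D := [set p : 'I_d * 'I_n | (p.2 != w p.1) && (upd w p.1 p.2 \in S)].
have -> : \sum_(i < d) deg_along w i = #|D|.
  rewrite pair_big /= -sum1_card [RHS]big_mkcond /=.
  by apply: eq_bigr => p _; rewrite inE; case: (_ && _).
have upd_inj : {in D &, injective (fun p => upd w p.1 p.2)}.
  move=> [i b] [i' b']; rewrite !inE /= => /andP [neq_b _] /andP [neq_b' _] e.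
  have e_i : i' = i.
    apply/eqP; case: (i' =P i) => // /eqP neq_i.
    have := congr1 (fun f : vertex n d => f i) e.
    by rewrite /= upd_same upd_other 1?eq_sym // => e_b; rewrite e_b eqxx in neq_b.
  by subst i'; rewrite -(upd_same w i b) e upd_same.
rewrite -(card_in_imset upd_inj); apply/subset_leq_card/subsetP => x /imsetP [[i b]].
by rewrite inE /= => /andP [neq_b S_upd] ->; rewrite !inE S_upd andbT Kadj_upd.
Qed.

Definition agree_from m (v w : vertex n d) := forall i : 'I_d, m <= i -> w i = v i.

Definition in_seed m r (w : vertex n d) :=
  exists2 t, t \in Tset d & \sum_(i < d | i < m) reflect_by t w i < uphalf r.

(* The threshold is quantified because it drops when passing to a slice. *)
Definition slices_fill m := forall r v, r < n ->
  (forall w, agree_from m v w -> r <= \sum_(i < d | i < m) deg_along w i -> w \in S) ->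
  (forall w, agree_from m v w -> in_seed m r w -> w \in S) -> v \in S.

Lemma slices_fill2 : 1 < d -> slices_fill 2.
Proof.
move=> lt1d r v lt_rn S_closed S_seed.
pose i0 := Ordinal (ltnW lt1d); pose i1 := Ordinal lt1d.
pose W a b := upd (upd v i0 a) i1 b.
have W0 a b : W a b i0 = a by rewrite upd_other // upd_same.
have W1 a b : W a b i1 = b by rewrite upd_same.
have W_agree a b : agree_from 2 v (W a b).
  by move=> i le2i; rewrite !upd_other //; apply/eqP => e; move: le2i; rewrite e.
have sum2 F : \sum_(i < d | i < 2) F i = F i0 + F i1.
  by rewrite (sum_ord_ltS _ (j := i1)) // (sum_ord_ltS _ (j := i0)) // big1.
have W_upd0 a b a' : upd (W a b) i0 a' = W a' b.
  apply/ffunP => j; rewrite !ffunE.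
  case: (j =P i0) => [->|_]; last by case: (j =P i1).
  by rewrite (negbTE (_ : i0 != i1)) ?eqxx.
have W_upd1 a b b' : upd (W a b) i1 b' = W a b'.
  by apply/ffunP => j; rewrite !ffunE; case: (j =P i1).
pose P x y := ord_pred (fun a => ord_pred (fun b => W a b \in S) y) x.
have PW (a b : 'I_n) : P a b = (W a b \in S) by rewrite /P !ord_predE.
have row_W (a b : 'I_n) : row_deg n P a b = deg_along (W a b) i0.
  by rewrite /row_deg /deg_along W0 big_mkord; apply: eq_bigr => a' _; rewrite W_upd0 PW.
have col_W (a b : 'I_n) : col_deg n P a b = deg_along (W a b) i1.
  by rewrite /col_deg /deg_along W1 big_mkord; apply: eq_bigr => b' _; rewrite W_upd1 PW.
have -> : v = W (v i0) (v i1).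
  apply/ffunP => j; rewrite !ffunE.
  by case: (j =P i1) => [-> //|_]; case: (j =P i0) => [->|].
suff : P (v i0) (v i1) by rewrite PW.
apply: (rook_plane_fill lt_rn (P := P)) => //; apply: nat2_of_ord => a b.
- rewrite row_W col_W PW => deg_ge; apply: S_closed (W_agree a b) _.
  by rewrite sum2.
- rewrite PW => near; apply: S_seed (W_agree a b) _.
  by exists [ffun=> false]; rewrite ?Tset_const // sum2 !reflect_byE W0 W1 !ffunE.
- have rev_val (x : 'I_n) : n.-1 - x = rev_ord x by rewrite /=; lia.
  rewrite /rot !rev_val PW => near; apply: S_seed (W_agree _ _) _.
  exists [ffun=> true]; rewrite ?Tset_const // sum2 !reflect_byE W0 W1 !ffunE /=; lia.
Qed.

Lemma slices_fill_step m : 1 < m -> m < d -> slices_fill m -> slices_fill m.+1.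
Proof.
move=> lt1m lt_md fill_m r v lt_rn S_closed S_seed.
pose j := Ordinal lt_md.
have sum_j F : \sum_(i < d | i < m.+1) F i = \sum_(i < d | i < m) F i + F j.
  exact: sum_ord_ltS.
suff near_j k w : agree_from m.+1 v w -> end_dist n (w j) < k -> w \in S.
  by apply: (near_j n) => //; have := ltn_ord (v j); rewrite /end_dist; lia.
elim: k w => [//|k IHk] w w_agree.
rewrite ltnS leq_eqVlt => /orP [/eqP e_k | ]; last exact: IHk.
have deg_j w' : agree_from m.+1 v w' -> k <= end_dist n (w' j) -> k + k <= deg_along w' j.
  move=> w'_agree le_k.
  rewrite /deg_along (sum_ord_pred (fun b => upd w' j b \in S)).
  apply: end_dist_sum_ge => [||i lt_in near_i]; [exact: ltn_ord | exact: le_k |].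
  rewrite (_ : i = Ordinal lt_in) // ord_predE; apply: IHk; last by rewrite upd_same.
  move=> i' le_i'; rewrite upd_other ?w'_agree //.
  by apply/eqP => e; move: le_i'; rewrite e /=; lia.
have [le_rk | lt_kr] := leqP r (k + k).
  apply: (S_closed _ w_agree); rewrite sum_j.
  by have := deg_j w w_agree; rewrite e_k => /(_ (leqnn k)); lia.
have slice_agree w' : agree_from m w w' -> agree_from m.+1 v w' /\ w' j = w j.
  move=> w'_agree; split; last exact: w'_agree.
  by move=> i lt_mi; rewrite w'_agree ?w_agree //; lia.
apply: (fill_m (r - (k + k)) w); first lia.
- move=> w' /slice_agree [w'_agree e_j] deg_ge; apply: (S_closed _ w'_agree).
  by rewrite sum_j; have := deg_j w' w'_agree; rewrite e_j e_k => /(_ (leqnn k)); lia.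
- move=> w' /slice_agree [w'_agree e_j] [t tT sum_lt]; apply: (S_seed _ w'_agree).
  pose b := w j != k :> nat.
  have sum_upd : \sum_(i < d | i < m) reflect_by (upd t j b) w' i
               = \sum_(i < d | i < m) reflect_by t w' i.
    apply: eq_bigr => i lt_im; rewrite !reflect_byE upd_other //.
    by apply/eqP => e; move: lt_im; rewrite e /=; lia.
  exists (upd t j b); first by apply: Tset_upd.
  have refl_j : (if b then n.-1 - w j else w j) = k.
    by have := ltn_ord (w j); move: e_k; rewrite /b /end_dist; case: eqP => /=; lia.
  by rewrite sum_j sum_upd reflect_byE upd_same e_j refl_j; lia.
Qed.

Lemma slices_fill_dim : 1 < d -> slices_fill d.
Proof.
move=> lt1d; suff fill m : 1 < m <= d -> slices_fill m by apply: fill; rewrite lt1d leqnn.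
elim: m => [//|m IHm] /andP [lt1m le_md].
have [lt_m2 | le2m] := ltnP m 2.
  by rewrite (_ : m.+1 = 2); [apply: slices_fill2 | lia].
by apply: slices_fill_step => //; apply: IHm; lia.
Qed.

End Slices.

Lemma seed_in_calA n d r (w : vertex n d) : 0 < r -> in_seed d r w -> w \in calA n d r.
Proof.
move=> r_gt0 [t tT sum_lt]; apply/bigcupP; exists t => //.
rewrite inE; apply/existsP; exists (reflect_by t w); rewrite reflect_byK eqxx andbT inE.
by move: sum_lt; rewrite sum_ord_lt_dim; lia.
Qed.

Theorem lemma4p1 (n r d : nat) :
  0 < n -> 0 < r -> 0 < d -> r + 1 <= n -> 2 <= d ->
  percolating r (calA n d r).
Proof.
move=> _ r_gt0 _; rewrite addn1 => lt_rn lt1d.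
apply: percolating_of_closed => S sub_S S_closed v.
apply: (slices_fill_dim lt1d lt_rn) => w _.
  by rewrite sum_ord_lt_dim => deg_ge; apply/S_closed/(leq_trans deg_ge)/sum_deg_along_le.
by move=> seed_w; apply/(subsetP sub_S)/seed_in_calA.
Qed.
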